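(* There exists an $S(3,K_4^{(3)}+e,v)$ for each $v\in\{7,11,16,26,31,32\}$.
   Context: $K_4^{(3)}+e$ denotes the 3-uniform hypergraph with vertex set $\{1,2,3,4,5\}$ and edge set $\{\{1,2,3\},\{1,2,4\},\{1,3,4\},\{2,3,4\},\{3,4,5\}\}$. An $S(3,K_4^{(3)}+e,v)$ is a collection of 3-uniform hypergraphs (blocks) on subsets of a $v$-set $X$, each isomorphic to $K_4^{(3)}+e$, whose edge sets partition the set of all 3-subsets of $X$. *)

From mathcomp Require Import all_boot.
Set Implicit Arguments. Unset Strict Implicit. Unset Printing Implicit Defensive.

(* Vertices of K_4^(3)+e are 'I_5, with 0,1,2,3,4 standing for 1,2,3,4,5. *)
Definition v5 (i : nat) : 'I_5 := inord i.

Definition K4e_edges : seq {set 'I_5} :=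
  [:: [set v5 0; v5 1; v5 2]; [set v5 0; v5 1; v5 3]; [set v5 0; v5 2; v5 3];
      [set v5 1; v5 2; v5 3]; [set v5 2; v5 3; v5 4]].

(* A block on the point set X = 'I_v is a copy of K_4^(3)+e, given by an
   injective vertex map f : 'I_5 -> 'I_v (an isomorphism onto the block). *)
Definition block_edges (v : nat) (f : {ffun 'I_5 -> 'I_v}) : seq {set 'I_v} :=
  map (fun e : {set 'I_5} => f @: e) K4e_edges.

(* An S(3, K_4^(3)+e, v): a collection (list) of blocks whose edge sets
   partition the 3-subsets of X: each 3-subset of X occurs as an edge of
   exactly one block (counted with multiplicity). *)
Definition is_S3_K4e (v : nat) (B : seq {ffun 'I_5 -> 'I_v}) : Prop :=
  (forall f, f \in B -> injective f) /\
  (forall T : {set 'I_v}, #|T| = 3 ->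
     sumn [seq count (pred1 T) (block_edges f) | f <- B] = 1).

(* Each design is the cyclic development modulo v of a few base blocks.  Once
   the 5 |B| = C(v,3) edges of its blocks are known to be pairwise distinct
   3-sets, they must be all the 3-sets, each occurring exactly once; the
   distinctness is verified by computation on the edges encoded as sorted
   triples of naturals. *)

From mathcomp Require Import all_boot all_order.
Set Implicit Arguments. Unset Strict Implicit. Unset Printing Implicit Defensive.
Import Order.TTheory.

Lemma count_mem_uniq_ksets (T : finType) (k : nat) (E : seq {set T}) :
  uniq E -> {in E, forall A : {set T}, #|A| = k} -> size E = 'C(#|T|, k) ->
  forall A : {set T}, #|A| = k -> count_mem A E = 1.
Proof.
move=> uE cardE sizeE A cardA.
have sub : [set A in E] \subset [set B : {set T} | #|B| == k].
  by apply/subsetP=> B; rewrite !inE => /cardE ->.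
have eq_card : #|[set A in E]| = #|[set B : {set T} | #|B| == k]|.
  by rewrite cardsE card_draws -sizeE (card_uniqP uE).
have AE : A \in E.
  have : A \in [set B : {set T} | #|B| == k] by rewrite inE cardA.
  by rewrite -(subset_cardP eq_card sub) inE.
by rewrite count_uniq_mem // AE.
Qed.

Definition K4e_index : seq (seq nat) :=
  [:: [:: 0; 1; 2]; [:: 0; 1; 3]; [:: 0; 2; 3]; [:: 1; 2; 3]; [:: 2; 3; 4]].

Lemma K4e_edgesE : K4e_edges = [seq [set x in map v5 l] | l <- K4e_index].
Proof.
have set3E (a b c : 'I_5) : [set a; b; c] = [set x in [:: a; b; c]].
  by apply/setP=> x; rewrite !inE orbA.
by rewrite /K4e_edges /= !set3E.
Qed.

Lemma v5K (l : seq nat) : all (gtn 5) l -> map val (map v5 l) = l.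
Proof. by elim: l => //= a l IH /andP[a5 /IH ->]; rewrite inordK. Qed.

Lemma K4e_indexP (l : seq nat) :
  l \in K4e_index -> [&& all (gtn 5) l, uniq l & size l == 3].
Proof. by move: l; apply/allP. Qed.

Lemma uniq_K4e_index (l : seq nat) : l \in K4e_index -> uniq (map v5 l).
Proof.
case/K4e_indexP/and3P=> l5 ul _.
by apply: (map_uniq (f := val)); rewrite v5K.
Qed.

Lemma card_block_edge (v : nat) (f : {ffun 'I_5 -> 'I_v}) :
  injective f -> {in block_edges f, forall A : {set _}, #|A| = 3}.
Proof.
move=> finj A; rewrite /block_edges K4e_edgesE -map_comp.
case/mapP=> l l_in -> /=.
rewrite card_imset // cardsE (card_uniqP (uniq_K4e_index l_in)) size_map.
by case/K4e_indexP/and3P: l_in => _ _ /eqP.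
Qed.

Lemma is_S3_K4e_uniq_edges (v : nat) (B : seq {ffun 'I_5 -> 'I_v}) :
  {in B, forall f : {ffun 'I_5 -> 'I_v}, injective f} ->
  uniq (flatten (map (@block_edges v) B)) -> 5 * size B = 'C(v, 3) ->
  is_S3_K4e B.
Proof.
move=> injB uE sizeB; split=> [f /injB //|T T3].
have -> : sumn [seq count (pred1 T) (block_edges f) | f <- B]
          = count_mem T (flatten (map (@block_edges v) B)).
  by rewrite count_flatten -map_comp.
apply: (count_mem_uniq_ksets (k := 3)) => //.
- by move=> A /flatten_mapP[f /injB finj]; apply: card_block_edge.
- by rewrite card_ord -sizeB; elim: (B) => //= f B' ->; rewrite mulnS.
Qed.

Definition set_key (m : nat) (A : {set 'I_m}) : seq nat :=
  sort leq (map val (enum A)).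

Lemma set_key_imset (k m : nat) (f : 'I_k -> 'I_m) (l : seq 'I_k) :
  injective f -> uniq l ->
  set_key (f @: [set x in l]) = sort leq (map (val \o f) l).
Proof.
move=> finj ul; rewrite /set_key.
apply/perm_sortP; [exact: leq_total | exact: leq_trans | exact: anti_leq |].
rewrite map_comp perm_map // uniq_perm ?enum_uniq ?map_inj_uniq // => y.
rewrite mem_enum; apply/imsetP/mapP=> -[x xl ->]; exists x => //.
  by rewrite inE in xl.
by rewrite inE.
Qed.

Section NatCertificate.
Variable n : nat.

Definition block_of (s : seq nat) : {ffun 'I_5 -> 'I_n.+1} :=
  [ffun i : 'I_5 => inord (nth 0 s i)].

Definition block_seq (s : seq nat) : bool :=
  [&& size s == 5, uniq s & all (gtn n.+1) s].

Lemma block_ofE (s : seq nat) (i : 'I_5) :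
  block_seq s -> val (block_of s i) = nth 0 s i.
Proof.
case/and3P=> /eqP size_s _ /allP small_s; rewrite ffunE /= inordK //.
by apply: small_s; rewrite mem_nth ?size_s.
Qed.

Lemma block_of_inj (s : seq nat) : block_seq s -> injective (block_of s).
Proof.
move=> ok_s i j /(congr1 val); rewrite !block_ofE //.
case/and3P: ok_s => /eqP size_s uniq_s _ /eqP eq_ij; apply/ord_inj/eqP.
by rewrite -(nth_uniq 0 _ _ uniq_s) ?size_s.
Qed.

Definition edge_keys (s : seq nat) : seq (seq nat) :=
  [seq sort leq [seq nth 0 s i | i <- l] | l <- K4e_index].

Lemma block_edges_key (s : seq nat) :
  block_seq s -> map (@set_key _) (block_edges (block_of s)) = edge_keys s.
Proof.
move=> ok_s; rewrite /block_edges K4e_edgesE -!map_comp.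
apply/eq_in_map=> l l_in /=.
rewrite set_key_imset ?uniq_K4e_index //; last exact: block_of_inj.
congr sort; rewrite -map_comp; apply/eq_in_map=> i i_l /=.
case/K4e_indexP/and3P: l_in => /allP l5 _ _.
by rewrite block_ofE // /v5 inordK //; apply: l5.
Qed.

(* Distinctness of the keys is tested by sorting them lexicographically, which
   is much faster to evaluate than [uniq]. *)
Definition K4e_certificate (D : seq (seq nat)) : bool :=
  [&& all block_seq D,
      sorted <%O (sort <=%O (flatten (map edge_keys D) : seq (seqlexi nat)))
    & 5 * size D == 'C(n.+1, 3)].

Lemma K4e_certificateP (D : seq (seq nat)) :
  K4e_certificate D -> is_S3_K4e (map block_of D).
Proof.
case/and3P=> /allP ok_D + /eqP size_D; rewrite sort_lt_sorted => uniq_keys.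
apply: is_S3_K4e_uniq_edges; last by rewrite size_map.
  by move=> _ /mapP[s /ok_D ok_s ->]; apply: block_of_inj.
apply: (map_uniq (f := @set_key _)); rewrite map_flatten -!map_comp.
by rewrite (eq_in_map _ edge_keys D).1 // => s /ok_D /block_edges_key.
Qed.

End NatCertificate.

Definition cyclic_development (v : nat) (base : seq (seq nat)) :
  seq (seq nat) :=
  [seq [seq (x + k) %% v | x <- b] | b <- base, k <- iota 0 v].

Definition base_blocks (v : nat) : seq (seq nat) :=
  match v with
  | 7 => [:: [:: 0; 1; 2; 4; 5]]
  | 11 => [:: [:: 0; 1; 2; 4; 7]; [:: 0; 1; 6; 9; 2]; [:: 0; 2; 6; 7; 3]]
  | 16 => [:: [:: 0; 2; 1; 9; 7]; [:: 0; 2; 4; 7; 1]; [:: 0; 1; 3; 4; 8];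
      [:: 0; 3; 8; 10; 4]; [:: 0; 8; 4; 13; 14]; [:: 0; 5; 3; 9; 8];
      [:: 0; 1; 6; 12; 13]]
  | 26 => [:: [:: 0; 2; 14; 1; 5]; [:: 0; 17; 4; 1; 18]; [:: 0; 1; 19; 24; 13];
      [:: 0; 23; 24; 6; 10]; [:: 0; 6; 16; 18; 21]; [:: 0; 22; 5; 21; 18];
      [:: 0; 21; 7; 25; 16]; [:: 0; 11; 9; 7; 25]; [:: 0; 7; 3; 19; 12];
      [:: 0; 17; 25; 14; 12]; [:: 0; 12; 6; 2; 8]; [:: 0; 6; 1; 7; 14];
      [:: 0; 21; 12; 18; 5]; [:: 0; 9; 21; 24; 5]; [:: 0; 11; 22; 25; 19];
      [:: 0; 19; 5; 9; 25]; [:: 0; 16; 1; 11; 19]; [:: 0; 21; 8; 19; 2];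
      [:: 0; 22; 3; 18; 23]; [:: 0; 9; 2; 20; 7]]
  | 31 => [:: [:: 0; 13; 2; 6; 14]; [:: 0; 8; 11; 6; 19];
      [:: 0; 26; 16; 27; 10]; [:: 0; 29; 14; 6; 16]; [:: 0; 9; 21; 22; 1];
      [:: 0; 25; 30; 24; 16]; [:: 0; 26; 14; 23; 19]; [:: 0; 3; 5; 14; 19];
      [:: 0; 19; 20; 2; 13]; [:: 0; 23; 12; 28; 11]; [:: 0; 25; 3; 4; 5];
      [:: 0; 15; 16; 28; 18]; [:: 0; 7; 5; 4; 8]; [:: 0; 12; 7; 24; 6];
      [:: 0; 7; 28; 30; 26]; [:: 0; 15; 22; 7; 8]; [:: 0; 10; 14; 27; 29];
      [:: 0; 10; 24; 26; 2]; [:: 0; 5; 26; 18; 22]; [:: 0; 18; 28; 25; 11];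
      [:: 0; 4; 23; 13; 29]; [:: 0; 10; 17; 28; 8]; [:: 0; 12; 5; 16; 22];
      [:: 0; 22; 4; 16; 10]; [:: 0; 3; 12; 11; 20]; [:: 0; 6; 26; 22; 1];
      [:: 0; 2; 22; 14; 21]; [:: 0; 29; 25; 22; 7]; [:: 0; 13; 29; 19; 9]]
  | 32 => [:: [:: 0; 22; 6; 1; 19]; [:: 0; 2; 8; 19; 4]; [:: 0; 29; 7; 21; 30];
      [:: 0; 8; 10; 22; 6]; [:: 0; 24; 22; 28; 13]; [:: 0; 29; 16; 6; 2];
      [:: 0; 26; 22; 2; 3]; [:: 0; 17; 11; 15; 18]; [:: 0; 14; 12; 27; 18];
      [:: 0; 11; 5; 25; 12]; [:: 0; 18; 3; 2; 13]; [:: 0; 7; 15; 23; 18];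
      [:: 0; 12; 20; 17; 7]; [:: 0; 19; 16; 15; 2]; [:: 0; 31; 27; 30; 18];
      [:: 0; 23; 31; 24; 17]; [:: 0; 3; 30; 25; 26]; [:: 0; 10; 27; 19; 16];
      [:: 0; 11; 14; 31; 24]; [:: 0; 26; 12; 8; 3]; [:: 0; 26; 1; 18; 28];
      [:: 0; 9; 30; 10; 29]; [:: 0; 13; 26; 5; 15]; [:: 0; 4; 2; 25; 24];
      [:: 0; 9; 6; 13; 2]; [:: 0; 14; 10; 29; 4]; [:: 0; 19; 30; 7; 12];
      [:: 0; 13; 31; 2; 5]; [:: 0; 18; 16; 23; 1]; [:: 0; 31; 6; 26; 29];
      [:: 0; 21; 16; 12; 25]]
  | _ => [::]
  end.

Lemma base_blocks_certified :
  all (fun v => K4e_certificate v.-1 (cyclic_development v (base_blocks v)))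
      [:: 7; 11; 16; 26; 31; 32].
Proof. by vm_compute. Qed.

Theorem lemma3p1 (v : nat) :
  v \in [:: 7; 11; 16; 26; 31; 32] ->
  exists B : seq {ffun 'I_5 -> 'I_v}, is_S3_K4e B.
Proof.
case: v => [//|n] v_in.
exists (map (block_of n) (cyclic_development n.+1 (base_blocks n.+1))).
exact/K4e_certificateP/(allP base_blocks_certified).
Qed.
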